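(* Every functional $\Lambda$-system algebra over a set $\mathcal{X}$ that has unique fixed points and whose function $\Gamma$ permits reordering is connection-order invariant.
   Context: Let $\Lambda,\mathcal{X}$ be sets. For finite disjoint $\mathcal{I},\mathcal{O}\subseteq\Lambda$ let $\mathfrak{S}_{\mathcal{I},\mathcal{O}}$ be a set of functions $s:\mathcal{X}^{\mathcal{I}}\to\mathcal{X}^{\mathcal{O}}$ (where $\mathcal{X}^{\mathcal{I}}$ is the set of functions $\mathcal{I}\to\mathcal{X}$, i.e. tuples indexed by $\mathcal{I}$), and let $\mathfrak{S}$ be their union. For $s\in\mathfrak{S}_{\mathcal{I},\mathcal{O}}$, $i\in\mathcal{I}$, $o\in\mathcal{O}$, $\mathbf{x}\in\mathcal{X}^{\mathcal{I}\setminus\{i\}}$ let $\mathrm{Fix}(s,i,o,\mathbf{x}):=\{x_i\in\mathcal{X}\mid s(\mathbf{x}\cup\{(i,x_i)\})(o)=x_i\}$. Let $\Gamma$ assign to each $s\in\mathfrak{S}_{\mathcal{I},\mathcal{O}}$ a set of unordered pairs $\{i,o\}$ with $i\in\mathcal{I}$, $o\in\mathcal{O}$, such that $\mathrm{Fix}(s,i,o,\mathbf{x})\neq\emptyset$ for all $\mathbf{x}$, and for each such $s$ and $\{i,o\}\in\Gamma(s)$ let $\phi^s_{i,o}:\mathcal{X}^{\mathcal{I}\setminus\{i\}}\to\mathcal{X}$ satisfy $\phi^s_{i,o}(\mathbf{x})\in\mathrm{Fix}(s,i,o,\mathbf{x})$. Define $\lambda(s)=\mathcal{I}\cup\mathcal{O}$;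 for $s_1\in\mathfrak{S}_{\mathcal{I}_1,\mathcal{O}_1}$, $s_2\in\mathfrak{S}_{\mathcal{I}_2,\mathcal{O}_2}$ with $\mathcal{I}_1,\mathcal{I}_2,\mathcal{O}_1,\mathcal{O}_2$ pairwise disjoint, $s_1\parallel s_2:\mathcal{X}^{\mathcal{I}_1\cup\mathcal{I}_2}\to\mathcal{X}^{\mathcal{O}_1\cup\mathcal{O}_2}$ with $(s_1\parallel s_2)(\mathbf{x})(o_j)=s_j(\mathbf{x}|_{\mathcal{I}_j})(o_j)$ for $o_j\in\mathcal{O}_j$; and for $\{i,o\}\in\Gamma(s)$, $\gamma_{i,o}(s):\mathcal{X}^{\mathcal{I}\setminus\{i\}}\to\mathcal{X}^{\mathcal{O}\setminus\{o\}}$, $\gamma_{i,o}(s)(\mathbf{x})=s(\mathbf{x}\cup\{(i,\phi^s_{i,o}(\mathbf{x}))\})|_{\mathcal{O}\setminus\{o\}}$. If $\mathfrak{S}$ is closed under $\parallel$ and $\gamma$ and for all $s_1,s_2$ with $\lambda(s_1)\cap\lambda(s_2)=\emptyset$, $j\in\{1,2\}$, $i,o\in\lambda(s_j)$ we have $\{i,o\}\in\Gamma(s_1\parallel s_2)\iff\{i,o\}\in\Gamma(s_j)$, then $(\mathfrak{S},\lambda,\parallel,\Gamma,\gamma)$ is called a functional $\Lambda$-system algebra over $\mathcal{X}$. It has unique fixed points if $|\mathrm{Fix}(s,i,o,\mathbf{x})|=1$ for all $s$, $\{i,o\}\in\Gamma(s)$, $\mathbf{x}$. $\Gamma$ permits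 reordering if for all $s$, $\{i,o\}\in\Gamma(s)$ and $\{i',o'\}\in\Gamma(\gamma_{i,o}(s))$ we have $\{i',o'\}\in\Gamma(s)$ and $\{i,o\}\in\Gamma(\gamma_{i',o'}(s))$; the algebra is connection-order invariant if $\Gamma$ permits reordering and in that situation $\gamma_{i',o'}(\gamma_{i,o}(s))=\gamma_{i,o}(\gamma_{i',o'}(s))$. *)

From HB Require Import structures.
From mathcomp Require Import all_boot.
From mathcomp Require Import finmap.
From mathcomp Require Import boolp.

Set Implicit Arguments.
Unset Strict Implicit.
Unset Printing Implicit Defensive.

Local Open Scope fset_scope.

Section FunctionalSystems.

(* Lam = the label set Λ (an arbitrary type; made a choiceType classically via
   {classic _} so that finite label sets can be {fset _}); X = the value set. *)
Variables (Lam : Type) (X : Type).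
Local Notation L := {classic Lam}.

(* X^A (tuples indexed by A) is the function type (A -> X), where A : {fset L}
   is coerced to the finite type of its elements. *)
Record sys := Sys { sI : {fset L}; sO : {fset L}; sf : (sI -> X) -> (sO -> X) }.
Arguments sf : clear implicits.

Definition lam (s : sys) : {fset L} := sI s `|` sO s.

Lemma inU_r (A B : {fset L}) (a : A `|` B) : val a \notin A -> val a \in B.
Proof. by move=> h; have := valP a; rewrite in_fsetU (negbTE h). Qed.

Lemma inD1 (A : {fset L}) (b : L) (a : A) : val a != b -> val a \in A `\ b.
Proof. by move=> h; rewrite in_fsetD1 h (valP a). Qed.

Definition restr (A B : {fset L}) (H : A `<=` B) (x : B -> X) : A -> X :=
  fun a => x (fincl H a).

(* x u {(i, xi)} : X^I, for x : X^(I \ {i}) *)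
Definition ext (I : {fset L}) (i : L) (x : (I `\ i) -> X) (xi : X) : I -> X :=
  fun j =>
    (if val j == i as b return (val j == i) = b -> X
     then fun _ => xi
     else fun h => x [` inD1 (negbT h)]) (erefl _).

(* parallel composition s1 || s2 (only meaningful when the label sets are
   pairwise disjoint, which is the only situation where it is used) *)
Definition par (s1 s2 : sys) : sys :=
  @Sys (sI s1 `|` sI s2) (sO s1 `|` sO s2)
    (fun x o =>
       (if val o \in sO s1 as b return (val o \in sO s1) = b -> X
        then fun h => sf s1 (restr (fsubsetUl _ _) x) [` h]
        else fun h => sf s2 (restr (fsubsetUr _ _) x) [` inU_r (negbT h)])
       (erefl _)).

Definition Fix (s : sys) (i o : L) (x : (sI s `\ i) -> X) (xi : X) : Prop :=
  forall o' : sO s, val o' = o -> sf s (ext x xi) o' = xi.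

Arguments Fix : clear implicits.
Definition phiT := forall (s : sys) (i o : L), ((sI s `\ i) -> X) -> X.

Definition gamma (phi : phiT) (s : sys) (i o : L) : sys :=
  @Sys (sI s `\ i) (sO s `\ o)
    (fun x o' => sf s (ext x (phi s i o x)) (fincl (fsubD1set _ _) o')).

(* Gamma s i o  encodes  {i,o} \in Gamma(s)  with i an input and o an output;
   {a,b} \in Gamma(s) for arbitrary labels a b is then GammaU. *)
Definition GammaU (Gam : sys -> L -> L -> Prop) (s : sys) (a b : L) : Prop :=
  Gam s a b \/ Gam s b a.

Definition functional_system_algebra (S : sys -> Prop)
    (Gam : sys -> L -> L -> Prop) (phi : phiT) : Prop :=
      (forall s, S s -> [disjoint sI s & sO s]) /\
      (forall s i o, S s -> Gam s i o -> i \in sI s /\ o \in sO s) /\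
      (forall s i o, S s -> Gam s i o -> forall x, exists xi, Fix s i o x xi) /\
      (forall s i o, S s -> Gam s i o -> forall x, Fix s i o x (phi s i o x)) /\
      (forall s1 s2, S s1 -> S s2 -> [disjoint lam s1 & lam s2] -> S (par s1 s2)) /\
      (forall s i o, S s -> Gam s i o -> S (gamma phi s i o)) /\
      (forall s1 s2, S s1 -> S s2 -> [disjoint lam s1 & lam s2] ->
         (forall a b, a \in lam s1 -> b \in lam s1 ->
            (GammaU Gam (par s1 s2) a b <-> GammaU Gam s1 a b)) /\
         (forall a b, a \in lam s2 -> b \in lam s2 ->
            (GammaU Gam (par s1 s2) a b <-> GammaU Gam s2 a b))).

Definition unique_fixed_points (S : sys -> Prop) (Gam : sys -> L -> L -> Prop) :
    Prop :=
  forall s i o, S s -> Gam s i o -> forall x, exists! xi, Fix s i o x xi.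

Definition permits_reordering (S : sys -> Prop) (Gam : sys -> L -> L -> Prop)
    (phi : phiT) : Prop :=
  forall s i o i' o', S s -> Gam s i o -> Gam (gamma phi s i o) i' o' ->
    Gam s i' o' /\ Gam (gamma phi s i' o') i o.

Definition connection_order_invariant (S : sys -> Prop)
    (Gam : sys -> L -> L -> Prop) (phi : phiT) : Prop :=
  permits_reordering S Gam phi /\
  (forall s i o i' o', S s -> Gam s i o -> Gam (gamma phi s i o) i' o' ->
     gamma phi (gamma phi s i o) i' o' = gamma phi (gamma phi s i' o') i o).

End FunctionalSystems.

(* Under unique fixed points, connecting (i,o) and then (i',o') feeds [s] the
   unique input [p] that is a fixed point at both (i,o) and (i',o') and
   extends the remaining inputs. This characterisation is symmetric in the
   two connections, so both orders feed [s] the same [p] and hence compute the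
   same function. *)
From Pilot Require Import Defs.
From mathcomp Require Import all_boot finmap boolp.

Set Implicit Arguments.
Unset Strict Implicit.
Unset Printing Implicit Defensive.

Local Open Scope fset_scope.

(* The [clear implicits] declarations of Defs are local to its section. *)
Arguments sf {Lam X} s _ _.
Arguments Fix {Lam X} s i o x xi.

Section Tuples.

Variables (Lam X : Type).
Local Notation L := {classic Lam}.

Definition agree (A B : {fset L}) (x : A -> X) (y : B -> X) : Prop :=
  forall (a : A) (b : B), val a = val b -> x a = y b.

Lemma fsetD1C (A : {fset L}) (a b : L) : A `\ a `\ b = A `\ b `\ a.
Proof. by rewrite !fsetDDl fsetUC. Qed.

Lemma ext_at (I : {fset L}) (i : L) (x : I `\ i -> X) xi (j : I) :
  val j = i -> ext x xi j = xi.
Proof.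
move=> ji; rewrite /ext; move: (erefl (val j == i)).
case: {2 3}(val j == i) => // j_ne_i.
by exfalso; move: j_ne_i; rewrite ji eqxx.
Qed.

Lemma ext_off (I : {fset L}) (i : L) (x : I `\ i -> X) xi (j : I) (k : I `\ i) :
  val k = val j -> ext x xi j = x k.
Proof.
move=> kj; rewrite /ext; move: (erefl (val j == i)).
case: {2 3}(val j == i) => j_eq_i; last by congr x; apply: val_inj.
by exfalso; move: (valP k) j_eq_i; rewrite in_fsetD1 kj => /andP[/negbTE ->].
Qed.
#[global] Arguments ext_off [I i x xi j] k _.

Lemma ext2C (I : {fset L}) (i i' : L) (x : I `\ i `\ i' -> X)
    (x' : I `\ i' `\ i -> X) (a b : X) :
  i != i' -> agree x x' -> ext (ext x a) b = ext (ext x' b) a.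
Proof.
move=> ii' xx'; apply: funext => j.
have [ji | ji] := eqVneq (val j) i.
  have ji' : val j != i' by rewrite ji.
  by rewrite ext_at // (ext_off [` inD1 ji']) // ext_at.
have [ji' | ji'] := eqVneq (val j) i'.
  by rewrite (ext_off [` inD1 ji]) // !ext_at.
rewrite (ext_off [` inD1 ji]) // (ext_off [` inD1 ji']) //.
rewrite (ext_off [` @inD1 _ _ _ [` inD1 ji] ji']) //
        (ext_off [` @inD1 _ _ _ [` inD1 ji'] ji]) //.
exact: xx'.
Qed.

Lemma eq_sys (s1 s2 : sys Lam X) :
  sI s1 = sI s2 -> sO s1 = sO s2 ->
  (forall x1 x2, agree x1 x2 -> agree (sf s1 x1) (sf s2 x2)) -> s1 = s2.
Proof.
case: s1 s2 => [I1 O1 f1] [I2 O2 f2] /= eI eO; subst => f12.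
congr Sys; apply: funext => x; apply: funext => w.
by apply: f12 => // j j' /val_inj ->.
Qed.

End Tuples.

Section FixedPoints.

Variables (Lam X : Type).
Local Notation L := {classic Lam}.
Local Notation sys := (sys Lam X).

Definition fixed_at (s : sys) (i o : L) (p : sI s -> X) : Prop :=
  forall (j : sI s) (w : sO s), val j = i -> val w = o -> sf s p w = p j.
Arguments fixed_at : clear implicits.

Lemma fixed_at_extP (s : sys) (i o : L) (y : sI s `\ i -> X) (xi : X) :
  i \in sI s -> fixed_at s i o (ext y xi) <-> Fix s i o y xi.
Proof.
move=> iI; split=> [fix_p w wo | Fy j w ji wo].
  by rewrite (fix_p [` iI] w) // ext_at.
by rewrite ext_at // Fy.
Qed.
Arguments fixed_at_extP {s i o y xi}.

Variable phi : phiT Lam X.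
Arguments phi : clear implicits.

Lemma fixed_at_gamma (s : sys) (i o i' o' : L) (z : sI s `\ i -> X) :
  i' != i -> o' != o ->
  fixed_at (gamma phi s i o) i' o' z <-> fixed_at s i' o' (ext z (phi s i o z)).
Proof.
move=> i'i o'o; split=> [fix_z j w ji' wo' | fix_p j w ji' wo'].
  have ji : val j != i by rewrite ji'.
  have wo : val w != o by rewrite wo'.
  rewrite (ext_off [` inD1 ji]) // -(fix_z _ [` inD1 wo]) //=.
  by congr (sf s _ _); apply: val_inj.
by rewrite /= (fix_p (fincl (fsubD1set _ _) j)) // (ext_off j).
Qed.

Variables (S : sys -> Prop) (Gam : sys -> L -> L -> Prop).

Hypothesis Gam_labels :
  forall s i o, S s -> Gam s i o -> i \in sI s /\ o \in sO s.
Hypothesis phi_Fix :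
  forall s i o, S s -> Gam s i o -> forall x, Fix s i o x (phi s i o x).
Hypothesis gamma_closed :
  forall s i o, S s -> Gam s i o -> S (gamma phi s i o).
Hypothesis fixed_points_unique : unique_fixed_points S Gam.

Lemma phi_eq_Fix (s : sys) (i o : L) (x : sI s `\ i -> X) (xi : X) :
  S s -> Gam s i o -> Fix s i o x xi -> phi s i o x = xi.
Proof.
move=> Ss Gio Fxi; have [c [_ c_unique]] := fixed_points_unique Ss Gio x.
by rewrite -(c_unique _ Fxi) (c_unique _ (phi_Fix Ss Gio x)).
Qed.

Lemma Gam_gamma_labels (s : sys) (i o i' o' : L) :
  S s -> Gam s i o -> Gam (gamma phi s i o) i' o' ->
  [/\ i' \in sI s `\ i, i' != i & o' != o].
Proof.
move=> Ss Gio /(Gam_labels (gamma_closed Ss Gio)) /= [i'I o'O].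
by have [/fsetD1P[-> _] /fsetD1P[-> _]] := (i'I, o'O).
Qed.

Definition gamma2_input (s : sys) (i o i' o' : L) (x : sI s `\ i `\ i' -> X) :
    sI s -> X :=
  let a := phi (gamma phi s i o) i' o' x in ext (ext x a) (phi s i o (ext x a)).
Arguments gamma2_input : clear implicits.

Lemma gamma2E (s : sys) (i o i' o' : L) x w :
  sf (gamma phi (gamma phi s i o) i' o') x w =
  sf s (gamma2_input s i o i' o' x)
     (fincl (fsubD1set _ _) (fincl (fsubD1set _ _) w)).
Proof. by []. Qed.

Section TwoConnections.

Variables (s : sys) (i o i' o' : L).
Hypotheses (Ss : S s) (Gio : Gam s i o) (Gi'o' : Gam (gamma phi s i o) i' o').

Lemma gamma2_input_fixed (x : sI s `\ i `\ i' -> X) :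
  fixed_at s i o (gamma2_input s i o i' o' x) /\
  fixed_at s i' o' (gamma2_input s i o i' o' x).
Proof.
have [iI _] := Gam_labels Ss Gio.
have [i'I i'i o'o] := Gam_gamma_labels Ss Gio Gi'o'.
split; first by apply/fixed_at_extP => //; apply: phi_Fix.
apply/fixed_at_gamma => //; apply/fixed_at_extP => //.
exact: phi_Fix (gamma_closed Ss Gio) Gi'o' x.
Qed.

Lemma gamma2_input_unique (x : sI s `\ i `\ i' -> X) (a b : X) :
  fixed_at s i o (ext (ext x a) b) -> fixed_at s i' o' (ext (ext x a) b) ->
  gamma2_input s i o i' o' x = ext (ext x a) b.
Proof.
have [iI _] := Gam_labels Ss Gio.
have [i'I i'i o'o] := Gam_gamma_labels Ss Gio Gi'o'.
move=> /(fixed_at_extP iI) Fb fix'.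
have hb : phi s i o (ext x a) = b := phi_eq_Fix Ss Gio Fb.
have ha : phi (gamma phi s i o) i' o' x = a.
  apply: phi_eq_Fix (gamma_closed Ss Gio) Gi'o' _.
  by apply/fixed_at_extP => //; apply/fixed_at_gamma => //; rewrite hb.
by rewrite /gamma2_input ha hb.
Qed.

End TwoConnections.

Lemma gamma_gammaC (s : sys) (i o i' o' : L) :
  S s -> Gam s i o -> Gam (gamma phi s i o) i' o' ->
  Gam s i' o' -> Gam (gamma phi s i' o') i o ->
  gamma phi (gamma phi s i o) i' o' = gamma phi (gamma phi s i' o') i o.
Proof.
move=> Ss Gio Gi'o' Gi'o'_s Gio_swap.
have [_ i'i _] := Gam_gamma_labels Ss Gio Gi'o'.
have ii' : i != i' by rewrite eq_sym.
apply: eq_sys; [exact: fsetD1C | exact: fsetD1C |].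
move=> x x' xx' w w' ww'.
have [fix_o fix_o'] := gamma2_input_fixed Ss Gio Gi'o' x.
have same_input : gamma2_input s i' o' i o x' = gamma2_input s i o i' o' x.
  rewrite [RHS]/gamma2_input (ext2C _ _ ii' xx').
  by apply: gamma2_input_unique; rewrite -?(ext2C _ _ ii' xx').
rewrite !gamma2E same_input; congr (sf s _ _); exact: val_inj.
Qed.

End FixedPoints.

Theorem lemma4p4 (Lam X : Type) (S : sys Lam X -> Prop)
    (Gam : sys Lam X -> {classic Lam} -> {classic Lam} -> Prop)
    (phi : phiT Lam X) :
  functional_system_algebra S Gam phi ->
  unique_fixed_points S Gam ->
  permits_reordering S Gam phi ->
  connection_order_invariant S Gam phi.
Proof.
move=> [_ [Gam_labels [_ [phi_Fix [_ [gamma_closed _]]]]]] ufp reorder.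
split=> // s i o i' o' Ss Gio Gi'o'.
have [Gi'o'_s Gio_swap] := reorder _ _ _ _ _ Ss Gio Gi'o'.
exact: (gamma_gammaC Gam_labels phi_Fix gamma_closed ufp).
Qed.
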